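(* Let $S$ be a Sauer Matrix of size $4$ and let $r \in [0,1)^4$ be feasible for $S$. (i) If $S$ is of type $(0,4)$, then $r = (\tfrac12,\tfrac12,\tfrac12,\tfrac12)^\intercal$. (ii) If $S$ is of type $(1,3)$, then $r = (0,\tfrac12,\tfrac12,\tfrac12)^\intercal$. (iii) If $S$ is of type $(2,2)$, then $r = (0,0,\tfrac12,\tfrac12)^\intercal$. (iv) If $S$ is of type $(3,1)$ or $(4,0)$, then $S$ is infeasible for translations (i.e. no such $r$ exists).
   Context: A real matrix is totally $1$-submodular if every square submatrix (of every size) has determinant of absolute value at most $1$. For $r\in\mathbb{R}^k$ and a matrix $S$ with $k$ rows and columns $S_1,\dots,S_N$, $r+S$ is the matrix with columns $r+S_i$. A Sauer Matrix of size $k$ is a matrix $S\in\{-1,0,1\}^{k\times 2^k}$ such that every subset of $[k]$ is the support (set of nonzero coordinates) of exactly one column, the nonzero entries being arbitrary elements of $\{-1,1\}$. A vector $r\in[0,1)^k$ is feasible for $S$ if $r+S$ is totally $1$-submodular; $S$ is feasible for translations if some $r\in[0,1)^k$ is feasible for $S$, and infeasible for translations otherwise. $S$ is of type $(s,k-s)$ if exactly $s$ of its rows contain at least one entry equal to $1$; by convention the rows are ordered so that these are the first $s$ rows. *)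

From mathcomp Require Import all_boot all_order all_algebra.
From mathcomp Require Import reals.
Set Implicit Arguments. Unset Strict Implicit. Unset Printing Implicit Defensive.
Import Order.TTheory GRing.Theory Num.Theory.
Local Open Scope ring_scope.

Definition totally_1_submodular (R : realType) (m n : nat) (M : 'M[R]_(m, n)) : Prop :=
  forall (p : nat) (f : 'I_p -> 'I_m) (g : 'I_p -> 'I_n),
    injective f -> injective g -> `|\det (mxsub f g M)| <= 1.

Definition col_support (k N : nat) (S : 'M[int]_(k, N)) (j : 'I_N) : {set 'I_k} :=
  [set i | S i j != 0].

Definition sauer_matrix (k : nat) (S : 'M[int]_(k, 2 ^ k)) : Prop :=
  (forall i j, S i j \in [:: 0; 1; -1]) /\
  (forall A : {set 'I_k}, exists! j : 'I_(2 ^ k), col_support S j = A).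

Definition translate (R : realType) (k N : nat) (r : 'cV[R]_k) (S : 'M[int]_(k, N))
  : 'M[R]_(k, N) := \matrix_(i, j) (r i 0 + (S i j)%:~R).

Definition feasible (R : realType) (k N : nat) (r : 'cV[R]_k) (S : 'M[int]_(k, N)) : Prop :=
  (forall i, 0 <= r i 0 < 1) /\ totally_1_submodular (translate r S).

Definition feasible_for_translations (R : realType) (k N : nat) (S : 'M[int]_(k, N)) : Prop :=
  exists r : 'cV[R]_k, feasible r S.

(* S is of type (s, k-s): exactly s rows contain an entry 1, and (by the
   ordering convention) these are the first s rows. *)
Definition sauer_type (k N : nat) (S : 'M[int]_(k, N)) (s : nat) : Prop :=
  forall i : 'I_k, (exists j, S i j = 1) <-> (i < s)%N.

From mathcomp Require Import all_boot all_order all_algebra.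
From mathcomp Require Import reals ring lra.
Set Implicit Arguments. Unset Strict Implicit. Unset Printing Implicit Defensive.
Import Order.TTheory GRing.Theory Num.Theory.
Local Open Scope ring_scope.

(* A row of S containing an entry 1 forces r_i = 0 through a 1 x 1 minor.
   For three distinct rows a, b, c and a set J of rows avoiding them, look at
   the columns of S supported on J + {a,b}, J + {b,c}, J + {a,c} and
   J + {a,b,c}: their +-1 entries on rows a, b, c give three 2 x 2 minors and
   one 3 x 3 minor, and the product of the sign patterns of the 2 x 2 minors
   fixes the sign pattern of the 3 x 3 one, so one of these four minors is
   +-2.  If r vanishes on a, b, c, this minor is also a minor of r + S.
   Otherwise, border it by a fourth row j on which S is constant (= e) on
   all these columns and on the column supported on J: the bordered minor of
   r + S is (r_j + e) times it, so |r_j + e| <= 1/2.  A row without entry 1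
   yields this for J = {} (e = 0) and J = {j} (e = -1), hence r_j = 1/2. *)

Definition minor (R : pzRingType) m n p (M : 'M[R]_(m, n))
    (t : p.-tuple 'I_m) (v : p.-tuple 'I_n) : R :=
  \det (mxsub (tnth t) (tnth v) M).

Section SmallMinors.
Variables (R : comPzRingType) (m n : nat) (M : 'M[R]_(m, n)).

Lemma minor2E (a b : 'I_m) (x y : 'I_n) :
  minor M [tuple a; b] [tuple x; y] = M a x * M b y - M a y * M b x.
Proof.
rewrite /minor (expand_det_row _ 0) !big_ord_recr big_ord0 /cofactor /= !det_mx11 !mxE /=.
ring.
Qed.

Lemma minor3E (a b c : 'I_m) (x y z : 'I_n) :
  minor M [tuple a; b; c] [tuple x; y; z] =
    M a x * (M b y * M c z - M b z * M c y) - M a y * (M b x * M c z - M b z * M c x)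
    + M a z * (M b x * M c y - M b y * M c x).
Proof.
rewrite /minor (expand_det_row _ 0) !big_ord_recr big_ord0 /cofactor /=.
rewrite !(expand_det_row _ 0) !big_ord_recr !big_ord0 /cofactor /= !det_mx11 !mxE /=.
ring.
Qed.
End SmallMinors.

Lemma det_const_row0 (R : comPzRingType) n (A : 'M[R]_n.+1) (x : R) : (forall l, A 0 l = x) ->
  \det A = x * \det (\matrix_(i, l) (A (lift 0 i) (lift 0 l) - A (lift 0 i) 0)).
Proof.
move=> A0x.
(* Right multiplication by 1 - N subtracts column 0 from all the other columns. *)
pose N : 'M[R]_n.+1 := \matrix_(q, l) ((q == 0) && (l != 0))%:R.
have detU : \det (1%:M - N) = 1.
  rewrite -det_tr det_trig; last first.
    apply/is_trig_mxP => i l il; rewrite !mxE.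
    have /negPf-> : l != i by apply: contraTneq il => ->; rewrite ltnn.
    have /negPf-> : l != 0 by apply: contraTneq il => ->; rewrite ltn0.
    by rewrite subrr.
  by rewrite big1 // => i _; rewrite !mxE eqxx andbN subr0.
have BE i l : (A *m (1%:M - N)) i l = A i l - A i 0 * (l != 0)%:R.
  rewrite mulmxBr mulmx1 !mxE (bigD1 0) //= mxE eqxx big1 ?addr0 // => q /negPf q0.
  by rewrite mxE q0 mulr0.
rewrite -[\det A]mulr1 -detU -det_mulmx (expand_det_row _ 0) (bigD1 0) //=.
rewrite big1 ?addr0 => [|l l0]; last by rewrite BE l0 !A0x mulr1 subrr mul0r.
rewrite BE eqxx mulr0 subr0 A0x /cofactor addn0 expr0 mul1r.
by congr (_ * \det _); apply/matrixP => i l; rewrite mxE [col' _ _ _ _]mxE BE mxE mulr1.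
Qed.

Lemma normr1_sign (R : realDomainType) (u : R) : `|u| = 1 -> u = 1 \/ u = -1.
Proof.
by move/eqP; rewrite eqr_norml => /andP[/orP[]/eqP-> _]; [left | right].
Qed.

Lemma sqr_normr1 (R : realDomainType) (u : R) : `|u| = 1 -> u * u = 1.
Proof. by move=> u1; rewrite -expr2 -real_normK ?num_real // u1 expr1n. Qed.

Lemma normrB_unit (R : realDomainType) (x u : R) : `|u| = 1 -> `|x - u| = `|x * u - 1|.
Proof. by move=> u1; rewrite -[LHS]mulr1 -{1}u1 -normrM mulrBl (sqr_normr1 u1). Qed.

Lemma normrD_unit (R : realDomainType) (x u : R) : `|u| = 1 -> `|x + u| = `|x * u + 1|.
Proof. by move=> u1; rewrite -[LHS]mulr1 -{1}u1 -normrM mulrDl (sqr_normr1 u1). Qed.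

Lemma sign_triple_obstruction (u1 u2 u3 : int) : `|u1| = 1 -> `|u2| = 1 -> `|u3| = 1 ->
  [|| `|u1 - 1| == 2, `|u2 - 1| == 2, `|u3 - 1| == 2 | `|u1 * u2 * u3 + 1| == 2].
Proof. by do 3![case/normr1_sign=> ->]. Qed.

Lemma sign_cycle_minors (a1 a2 b1 b2 c1 c2 d0 d1 d2 : int) :
  `|a1| = 1 -> `|a2| = 1 -> `|b1| = 1 -> `|b2| = 1 -> `|c1| = 1 -> `|c2| = 1 ->
  `|d0| = 1 -> `|d1| = 1 -> `|d2| = 1 ->
  [|| `|a1 * d1 - d0 * a2| == 2, `|b1 * d2 - d1 * b2| == 2,
      `|c1 * d2 - d0 * c2| == 2 | `|a1 * b1 * c2 + c1 * a2 * b2| == 2].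
Proof.
move=> a1n a2n b1n b2n c1n c2n d0n d1n d2n.
have unitM (x y : int) : `|x| = 1 -> `|y| = 1 -> `|x * y| = 1.
  by move=> xn yn; rewrite normrM xn yn mulr1.
(* Up to units, the 2 x 2 minors are u - 1 for u = a1 d1 (d0 a2), b1 d2 (d1 b2),
   c1 d2 (d0 c2), and the 3 x 3 minor is the product of these u, plus 1. *)
rewrite (normrB_unit _ (unitM _ _ d0n a2n)) (normrB_unit _ (unitM _ _ d1n b2n)).
rewrite (normrB_unit _ (unitM _ _ d0n c2n)).
rewrite (normrD_unit _ (unitM _ _ (unitM _ _ c1n a2n) b2n)).
have -> : a1 * b1 * c2 * (c1 * a2 * b2) =
    a1 * d1 * (d0 * a2) * (b1 * d2 * (d1 * b2)) * (c1 * d2 * (d0 * c2)).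
  rewrite -[LHS]mulr1 -(sqr_normr1 d0n) -[LHS]mulr1 -(sqr_normr1 d1n).
  by rewrite -[LHS]mulr1 -(sqr_normr1 d2n); ring.
apply: sign_triple_obstruction;
  by rewrite !normrM ?a1n ?a2n ?b1n ?b2n ?c1n ?c2n ?d0n ?d1n ?d2n ?mulr1.
Qed.

Section SauerColumns.
Variables (k : nat) (S : 'M[int]_(k, 2 ^ k)).

(* The default column is junk: in a Sauer matrix every support occurs. *)
Definition support_col (A : {set 'I_k}) : 'I_(2 ^ k) :=
  odflt (Ordinal (ltn_expl k (ltnSn 1))) [pick j | col_support S j == A].

Hypothesis HS : sauer_matrix S.

Lemma support_colK A : col_support S (support_col A) = A.
Proof.
case: HS => _ /(_ A) [j [jA _]]; rewrite /support_col.
by case: pickP => [l /eqP // | /(_ j)]; rewrite jA eqxx.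
Qed.

Lemma support_col_eq0 (A : {set 'I_k}) i : i \notin A -> S i (support_col A) = 0.
Proof. by rewrite -{1}[A]support_colK inE negbK => /eqP. Qed.

Lemma support_col_norm (A : {set 'I_k}) i : i \in A -> `|S i (support_col A)| = 1.
Proof.
rewrite -{1}[A]support_colK inE; have := HS.1 i (support_col A).
by rewrite !inE => /or3P[] /eqP ->.
Qed.

End SauerColumns.

Section CycleMinor.
Variables (k : nat) (S : 'M[int]_(k, 2 ^ k)) (J : {set 'I_k}) (a b c : 'I_k).
Hypotheses (HS : sauer_matrix S) (abc_uniq : uniq [:: a; b; c])
  (abc_J : [disjoint [set a; b; c] & J]).

Let col (Y : {set 'I_k}) := support_col S (J :|: Y).

Let col_eq0 i (Y : {set 'I_k}) : i \in [set a; b; c] -> i \notin Y -> S i (col Y) = 0.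
Proof.
move=> iabc iY; apply: support_col_eq0 => //.
by rewrite inE negb_or iY (disjointFr abc_J iabc).
Qed.

Let col_norm i (Y : {set 'I_k}) : i \in Y -> `|S i (col Y)| = 1.
Proof. by move=> iY; apply: support_col_norm; rewrite // inE iY orbT. Qed.

Let col_neq i (Y Z : {set 'I_k}) :
  i \in [set a; b; c] -> i \notin Y -> i \in Z -> col Y != col Z.
Proof.
move=> iabc iY iZ; apply/eqP => YZ.
by move: (col_norm iZ); rewrite -YZ col_eq0 ?normr0.
Qed.

Let col_shape i (Y : {set 'I_k}) : Y \subset [set a; b; c] -> i \in Y ->
  col_support S (col Y) :\: [set a; b; c] = J /\ col_support S (col Y) != J.
Proof.
move=> Yabc iY; rewrite support_colK //; split.
  rewrite setDUl; have /eqP-> : Y :\: [set a; b; c] == set0 by rewrite setD_eq0.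
  by rewrite setU0; apply/setDidPl; rewrite disjoint_sym.
apply/eqP => /setP/(_ i); rewrite inE iY orbT => /esym iJ.
by move: (disjointFr abc_J (subsetP Yabc i iY)); rewrite iJ.
Qed.

Lemma sauer_cycle_minor : exists p (t : p.-tuple 'I_k) (v : p.-tuple 'I_(2 ^ k)),
  [/\ uniq t, uniq v, {subset t <= [set a; b; c]},
      {in v, forall l, col_support S l :\: [set a; b; c] = J /\ col_support S l != J}
    & `|minor S t v| = 2].
Proof.
have [abF acF bcF] : [/\ (a == b) = false, (a == c) = false & (b == c) = false].
  move: abc_uniq; rewrite /= !inE !negb_or.
  by case/andP=> /andP[/negbTE-> /negbTE->] /andP[/negbTE-> _].
have neqF := (abF, acF, bcF, eq_sym b a, eq_sym c a, eq_sym c b).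
pose a1 := S a (col [set a; b]); pose a2 := S b (col [set a; b]).
pose b1 := S b (col [set b; c]); pose b2 := S c (col [set b; c]).
pose c1 := S a (col [set a; c]); pose c2 := S c (col [set a; c]).
pose d0 := S a (col [set a; b; c]); pose d1 := S b (col [set a; b; c]).
pose d2 := S c (col [set a; b; c]).
have : [|| `|a1 * d1 - d0 * a2| == 2, `|b1 * d2 - d1 * b2| == 2,
           `|c1 * d2 - d0 * c2| == 2 | `|a1 * b1 * c2 + c1 * a2 * b2| == 2].
  by apply: sign_cycle_minors; apply: col_norm; rewrite !inE eqxx ?orbT.
case/or4P => /eqP minor_eq2.
- exists 2, [tuple a; b], [tuple col [set a; b]; col [set a; b; c]]; split.
  + by rewrite /= inE abF.
  + by rewrite /= inE (col_neq (i := c)) // !inE ?neqF ?eqxx ?orbT.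
  + by move=> i; rewrite !inE => /orP[]/eqP->; rewrite !eqxx ?orbT.
  + by move=> l; rewrite !inE => /orP[]/eqP->; apply: (col_shape (i := a));
      rewrite ?subUset ?sub1set !inE ?eqxx ?orbT.
  + by rewrite minor2E.
- exists 2, [tuple b; c], [tuple col [set b; c]; col [set a; b; c]]; split.
  + by rewrite /= inE bcF.
  + by rewrite /= inE (col_neq (i := a)) // !inE ?neqF ?eqxx ?orbT.
  + by move=> i; rewrite !inE => /orP[]/eqP->; rewrite !eqxx ?orbT.
  + by move=> l; rewrite !inE => /orP[]/eqP->; apply: (col_shape (i := b));
      rewrite ?subUset ?sub1set !inE ?eqxx ?orbT.
  + by rewrite minor2E.
- exists 2, [tuple a; c], [tuple col [set a; c]; col [set a; b; c]]; split.
  + by rewrite /= inE acF.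
  + by rewrite /= inE (col_neq (i := b)) // !inE ?neqF ?eqxx ?orbT.
  + by move=> i; rewrite !inE => /orP[]/eqP->; rewrite !eqxx ?orbT.
  + by move=> l; rewrite !inE => /orP[]/eqP->; apply: (col_shape (i := a));
      rewrite ?subUset ?sub1set !inE ?eqxx ?orbT.
  + by rewrite minor2E.
exists 3, [tuple a; b; c], [tuple col [set a; b]; col [set b; c]; col [set a; c]]; split.
- by rewrite /= !inE !neqF.
- rewrite /= !inE !negb_or !andbT; apply/andP; split; [apply/andP; split|];
    [apply: (col_neq (i := c)) | apply: (col_neq (i := c)) | apply: (col_neq (i := a))];
    by rewrite !inE ?neqF ?eqxx ?orbT.
- by move=> i; rewrite !inE => /or3P[]/eqP->; rewrite !eqxx ?orbT.
- move=> l; rewrite !inE => /or3P[]/eqP->;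
    [apply: (col_shape (i := a)) | apply: (col_shape (i := b)) | apply: (col_shape (i := a))];
    by rewrite ?subUset ?sub1set !inE ?eqxx ?orbT.
rewrite minor3E (@col_eq0 a [set b; c]) ?(@col_eq0 b [set a; c]) ?(@col_eq0 c [set a; b]);
  try by rewrite !inE ?neqF ?eqxx ?orbT.
by rewrite -minor_eq2; congr `|_|; ring.
Qed.
End CycleMinor.

Lemma minor_le1 (R : realType) m n p (M : 'M[R]_(m, n))
    (t : p.-tuple 'I_m) (v : p.-tuple 'I_n) :
  totally_1_submodular M -> uniq t -> uniq v -> `|minor M t v| <= 1.
Proof. by move=> M1 /tuple_uniqP t_inj /tuple_uniqP v_inj; apply: M1. Qed.

Lemma minor_border (R : comPzRingType) m n p (M : 'M[R]_(m, n)) i0 j0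
    (t : p.-tuple 'I_m) (v : p.-tuple 'I_n) (x : R) :
  {in j0 :: v, forall j, M i0 j = x} ->
  minor M [tuple of i0 :: t] [tuple of j0 :: v] =
    x * \det (\matrix_(i, l) (M (tnth t i) (tnth v l) - M (tnth t i) j0)).
Proof.
move=> row_x; rewrite /minor (det_const_row0 (x := x)) => [|l]; last first.
  by rewrite mxE row_x ?(mem_tnth l [tuple of j0 :: v]).
by congr (_ * \det _); apply/matrixP => i l; rewrite !mxE !tnthS tnth0.
Qed.

Lemma constant_row_half_bound (R : realType) k (S : 'M[int]_(k, 2 ^ k)) (r : 'cV[R]_k)
    (j a b c : 'I_k) (J : {set 'I_k}) (e : int) :
  sauer_matrix S -> totally_1_submodular (translate r S) ->
  uniq [:: j; a; b; c] -> [disjoint [set a; b; c] & J] ->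
  (forall l, (j \in col_support S l) = (j \in J) -> S j l = e) ->
  `|r j 0 + e%:~R| * 2 <= 1.
Proof.
move=> HS S1 jabc abcJ row_j.
have j_abc : j \notin [set a; b; c] by case/andP: jabc; rewrite !inE -orbA.
have abc_uniq : uniq [:: a; b; c] by case/andP: jabc.
have [p [t [v [t_uniq v_uniq t_abc v_shape m2]]]] := sauer_cycle_minor HS abc_uniq abcJ.
pose cJ := support_col S J.
have := minor_le1 (t := [tuple of j :: t]) (v := [tuple of cJ :: v]) S1.
rewrite (minor_border t (x := r j 0 + e%:~R)); last first.
  move=> l l_in; rewrite mxE row_j //.
  case/predU1P: l_in => [->|/v_shape[<- _]]; first by rewrite support_colK.
  by rewrite [in RHS]inE j_abc.
rewrite (_ : \matrix_(i, l) _ = map_mx intr (mxsub (tnth t) (tnth v) S)); last first.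
  apply/matrixP => i l; rewrite !mxE support_col_eq0 //.
    by rewrite mulr0z addr0 addrAC subrr add0r.
  by rewrite (disjointFr abcJ) // t_abc ?mem_tnth.
rewrite det_map_mx normrM -intr_norm -[\det _]/(minor S t v) m2; apply.
- by rewrite /= t_uniq andbT; apply: contra j_abc; exact: t_abc.
- by rewrite /= v_uniq andbT; apply/negP => /v_shape[_]; rewrite support_colK // eqxx.
Qed.

Lemma feasible_row_with_one (R : realType) k N (S : 'M[int]_(k, N)) (r : 'cV[R]_k) i l :
  feasible r S -> S i l = 1 -> r i 0 = 0.
Proof.
case=> /(_ i)/andP[r_ge0 _] S1 Sil.
have := minor_le1 (t := [tuple i]) (v := [tuple l]) S1 isT isT.
by rewrite /minor det_mx11 !mxE /= Sil mulr1z ger0_norm; lra.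
Qed.

Lemma feasible_row_without_one (R : realType) k (S : 'M[int]_(k, 2 ^ k)) (r : 'cV[R]_k)
    (j a b c : 'I_k) :
  sauer_matrix S -> feasible r S -> uniq [:: j; a; b; c] -> (forall l, S j l != 1) ->
  r j 0 = 1 / 2.
Proof.
move=> HS [/(_ j)/andP[r_ge0 r_lt1] S1] jabc no1.
have j_abc : j \notin [set a; b; c] by case/andP: jabc; rewrite !inE -orbA.
have := constant_row_half_bound HS S1 (J := set0) (e := 0) jabc.
rewrite disjoints_subset setC0 subsetT mulr0z addr0 ger0_norm // => /(_ isT) upper.
have := constant_row_half_bound HS S1 (J := [set j]) (e := -1) jabc.
rewrite disjoint_sym disjoints1 j_abc mulrN1z ltr0_norm ?subr_lt0 // => /(_ isT) lower.
suff [up lo] : r j 0 * 2 <= 1 /\ - (r j 0 - 1) * 2 <= 1 by lra.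
split; [apply: upper => l; rewrite !inE => /negbFE/eqP // | apply: lower => l].
rewrite !inE eqxx; have := no1 l; have := HS.1 j l; rewrite !inE => /or3P[]/eqP-> //.
Qed.

Lemma feasible_no_three_zero_rows (R : realType) k (S : 'M[int]_(k, 2 ^ k)) (r : 'cV[R]_k)
    (a b c : 'I_k) :
  sauer_matrix S -> feasible r S -> uniq [:: a; b; c] ->
  r a 0 = 0 -> r b 0 = 0 -> r c 0 = 0 -> False.
Proof.
move=> HS [_ S1] abc ra rb rc.
have abc0 : [disjoint [set a; b; c] & set0] by rewrite disjoints_subset setC0 subsetT.
have [p [t [v [t_uniq v_uniq t_abc _ m2]]]] := sauer_cycle_minor HS abc abc0.
have := minor_le1 S1 t_uniq v_uniq.
rewrite /minor (_ : mxsub _ _ _ = map_mx intr (mxsub (tnth t) (tnth v) S)).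
  by rewrite det_map_mx -intr_norm -[\det _]/(minor S t v) m2; lra.
apply/matrixP => i l; rewrite !mxE.
move: (t_abc _ (mem_tnth i t)); rewrite !inE -orbA.
by case/or3P=> /eqP->; rewrite ?ra ?rb ?rc add0r.
Qed.

Lemma ord4_complement (i : 'I_4) : exists a b c : 'I_4, uniq [:: i; a; b; c].
Proof.
case: i => -[|[|[|[|//]]]] Hi;
  by [exists 1, 2, 3 | exists 0, 2, 3 | exists 0, 1, 3 | exists 0, 1, 2].
Qed.

Lemma feasible_row_by_type (R : realType) (S : 'M[int]_(4, 2 ^ 4)) (r : 'cV[R]_4) s i :
  sauer_matrix S -> feasible r S -> sauer_type S s ->
  r i 0 = if (i < s)%N then 0 else 1 / 2.
Proof.
move=> HS Hr Hs; case: ifP => [/(Hs i).2 [l Sil] | /negbT i_ge_s].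
  exact: feasible_row_with_one Hr Sil.
have [a [b [c iabc]]] := ord4_complement i.
apply: feasible_row_without_one HS Hr iabc _ => l; apply/eqP => Sil.
by case/negP: i_ge_s; apply/(Hs i); exists l.
Qed.

Theorem proposition3p5 (R : realType) (S : 'M[int]_(4, 2 ^ 4)) :
  sauer_matrix S ->
  [/\ forall r : 'cV[R]_4, feasible r S -> sauer_type S 0 ->
        r = \col_i (1 / 2),
      forall r : 'cV[R]_4, feasible r S -> sauer_type S 1 ->
        r = \col_i (if (i < 1)%N then 0 else 1 / 2),
      forall r : 'cV[R]_4, feasible r S -> sauer_type S 2 ->
        r = \col_i (if (i < 2)%N then 0 else 1 / 2)
    & (sauer_type S 3 \/ sauer_type S 4) -> ~ feasible_for_translations R S].
Proof.
move=> HS; split=> [r Hr Hs | r Hr Hs | r Hr Hs | Hs [r Hr]].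
- by apply/matrixP => i l; rewrite ord1 mxE (feasible_row_by_type i HS Hr Hs) ltn0.
- by apply/matrixP => i l; rewrite ord1 mxE (feasible_row_by_type i HS Hr Hs).
- by apply/matrixP => i l; rewrite ord1 mxE (feasible_row_by_type i HS Hr Hs).
have row0 (i : 'I_4) : (i < 3)%N -> r i 0 = 0.
  by move=> i3; case: Hs => Hs; rewrite (feasible_row_by_type i HS Hr Hs) (leq_trans i3).
by apply: (feasible_no_three_zero_rows (a := 0) (b := 1) (c := 2) HS Hr); rewrite ?row0.
Qed.
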